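(* Let $\mathcal C$ be an open (i.e. non-closed) convex curve whose radius of curvature satisfies $\rho\ge R_1$ at every point, for some constant $R_1>0$, and let $\mathcal L$ be a lattice in $\mathbb R^2$. Then $$\#(\mathcal C\cap\mathcal L)<4+\frac{\mathrm{Length}(\mathcal C)}{(A_{\mathcal L}R_1)^{1/3}}.$$ If in addition the total curvature satisfies $\int_{\mathcal C}\kappa\,ds\le\pi$, then $$\#(\mathcal C\cap\mathcal L)<2+\frac{\mathrm{Length}(\mathcal C)}{(A_{\mathcal L}R_1)^{1/3}}.$$
   Context: A lattice is a set $\mathcal L=\mathcal L(v_0,v_1,v_2)=\{v_0+mv_1+nv_2: m,n\in\mathbb Z\}$ where $v_0,v_1,v_2\in\mathbb R^2$ and $v_1,v_2$ are linearly independent. Its invariant is $A_{\mathcal L}=|\det(v_1,v_2)|$. All curves are of class $C^2$ with nonvanishing first and second derivative vectors, oriented so that the curvature $\kappa$ is positive; a convex curve is such a curve lying on the boundary of a convex planar region, and an open convex curve is a non-closed arc of such a boundary. The radius of curvature is $\rho=1/\kappa$, $s$ is arclength, and the total curvature is $\int_{\mathcal C}\kappa\,ds$. *)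

From Stdlib Require Import Reals Lra ZArith List.
From Coquelicot Require Import Coquelicot.
Open Scope R_scope.

Definition det2 (v1 v2 : R * R) : R := fst v1 * snd v2 - snd v1 * fst v2.

Definition in_lattice (v0 v1 v2 : R * R) (p : R * R) : Prop :=
  exists m n : Z,
    fst p = fst v0 + IZR m * fst v1 + IZR n * fst v2 /\
    snd p = snd v0 + IZR m * snd v1 + IZR n * snd v2.

Definition lattice_invariant (v1 v2 : R * R) : R := Rabs (det2 v1 v2).

Definition convex_set (K : R * R -> Prop) : Prop :=
  forall p q : R * R, K p -> K q -> forall l : R, 0 <= l <= 1 ->
    K ((1 - l) * fst p + l * fst q, (1 - l) * snd p + l * snd q).

Definition interior_pt (K : R * R -> Prop) (p : R * R) : Prop :=
  exists e : R, 0 < e /\ forall q : R * R,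
    (fst q - fst p) ^ 2 + (snd q - snd p) ^ 2 < e ^ 2 -> K q.

Definition boundary_pt (K : R * R -> Prop) (p : R * R) : Prop :=
  K p /\ ~ interior_pt K p.

Definition C2_regular (x y : R -> R) (a b : R) : Prop :=
  forall t, a <= t <= b ->
    ex_derive x t /\ ex_derive y t /\
    ex_derive (Derive x) t /\ ex_derive (Derive y) t /\
    continuous (Derive (Derive x)) t /\ continuous (Derive (Derive y)) t /\
    ((Derive x t) ^ 2 + (Derive y t) ^ 2 <> 0).

Definition speed (x y : R -> R) (t : R) : R :=
  sqrt ((Derive x t) ^ 2 + (Derive y t) ^ 2).

Definition curvature (x y : R -> R) (t : R) : R :=
  (Derive x t * Derive (Derive y) t - Derive y t * Derive (Derive x) t)
  / (speed x y t) ^ 3.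

Definition curve_length (x y : R -> R) (a b : R) : R :=
  RInt (speed x y) a b.

Definition total_curvature (x y : R -> R) (a b : R) : R :=
  RInt (fun t => Rabs (curvature x y t) * speed x y t) a b.

(** Open convex curve: a non-closed (injective) C^2 arc with nonzero
    curvature lying on the boundary of a convex planar region. *)
Definition open_convex_curve (x y : R -> R) (a b : R) : Prop :=
  a < b /\ C2_regular x y a b /\
  (forall t, a <= t <= b -> curvature x y t <> 0) /\
  (forall s t, a <= s <= b -> a <= t <= b -> (x s, y s) = (x t, y t) -> s = t) /\
  exists K : R * R -> Prop, convex_set K /\
    forall t, a <= t <= b -> boundary_pt K (x t, y t).

Definition on_curve (x y : R -> R) (a b : R) (p : R * R) : Prop :=
  exists t, a <= t <= b /\ p = (x t, y t).

From Stdlib Require Import Reals List.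
From Coquelicot Require Import Coquelicot.
From Stdlib Require Import Lra Psatz Classical ZArith Lia Ranalysis5 RList.
Open Scope R_scope.

(* Three lattice points on the arc are never collinear, because a convex arc
   with nonvanishing curvature contains no three collinear points; so the
   triangle they span has doubled area at least A_L.  Integrating the bound
   kappa <= 1/R1 three times along the arc bounds the same doubled area by
   l1 l2 (l1 + l2) / R1, where l1 and l2 are the arc lengths between consecutive
   points; hence l1 + l2 >= 2 (A_L R1)^(1/3). *)

Definition vsub (p q : R * R) : R * R := (fst p - fst q, snd p - snd q).

Definition orient (p q r : R * R) : R := det2 (vsub q p) (vsub r p).

Definition along (p w : R * R) (l : R) : R * R := (fst p + l * fst w, snd p + l * snd w).

Lemma along_0 (p w : R * R) : along p w 0 = p.
Proof. destruct p; unfold along; simpl; f_equal; ring. Qed.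

Lemma det2_antisym (u v : R * R) : det2 u v = - det2 v u.
Proof. unfold det2; ring. Qed.

Lemma Rabs_det2_comm (u v : R * R) : Rabs (det2 u v) = Rabs (det2 v u).
Proof. now rewrite det2_antisym, Rabs_Ropp. Qed.

Lemma Rabs_det2_le (u z : R * R) (e : R) :
  Rabs (fst u) <= e -> Rabs (snd u) <= e ->
  Rabs (det2 u z) <= e * (Rabs (fst z) + Rabs (snd z)).
Proof.
  intros H1 H2; unfold det2.
  eapply Rle_trans; [apply Rabs_triang|].
  rewrite Rabs_Ropp, !Rabs_mult.
  pose proof (Rabs_pos (fst z)); pose proof (Rabs_pos (snd z)); nra.
Qed.

Lemma sqnorm_pos (w : R * R) : w <> (0, 0) -> 0 < fst w * fst w + snd w * snd w.
Proof.
  destruct w as [w1 w2]; simpl; intros Hw.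
  destruct (Rlt_or_le 0 (w1 * w1 + w2 * w2)) as [H|H]; [exact H|].
  exfalso; apply Hw; f_equal; nra.
Qed.

Lemma vsub_neq0 (p q : R * R) : p <> q -> vsub p q <> (0, 0).
Proof.
  destruct p, q; unfold vsub; simpl; intros Hpq E; injection E; intros.
  apply Hpq; f_equal; lra.
Qed.

Lemma det2_parallel (w u v : R * R) :
  w <> (0, 0) -> det2 w u = 0 -> det2 w v = 0 -> det2 u v = 0.
Proof.
  intros Hw Hu Hv. apply sqnorm_pos in Hw.
  apply (Rmult_eq_reg_l (fst w * fst w + snd w * snd w)); [|lra].
  transitivity (fst w * (fst u * det2 w v - fst v * det2 w u)
              + snd w * (snd u * det2 w v - snd v * det2 w u));
    [unfold det2; ring | rewrite Hu, Hv; ring].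
Qed.

Lemma det2_eq0_along (w p q : R * R) :
  w <> (0, 0) -> det2 w (vsub q p) = 0 -> exists l, q = along p w l.
Proof.
  intros Hw Hq. apply sqnorm_pos in Hw.
  set (n := fst w * fst w + snd w * snd w) in *.
  exists ((fst (vsub q p) * fst w + snd (vsub q p) * snd w) / n).
  assert (n <> 0) by lra.
  assert (E1 : fst w * det2 w (vsub q p) = 0) by (rewrite Hq; ring).
  assert (E2 : snd w * det2 w (vsub q p) = 0) by (rewrite Hq; ring).
  unfold det2, vsub, along in *; destruct p as [p1 p2], q as [q1 q2]; simpl in *.
  f_equal; apply (Rmult_eq_reg_l n); auto; field_simplify; auto; unfold n; lra.
Qed.

(** * Convex sets *)

Lemma convex_combination3 (K : R * R -> Prop) (p q r : R * R) (al be ga : R) :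
  convex_set K -> K p -> K q -> K r ->
  0 <= al -> 0 <= be -> 0 <= ga -> al + be + ga = 1 ->
  K (al * fst p + be * fst q + ga * fst r, al * snd p + be * snd q + ga * snd r).
Proof.
  intros HK Hp Hq Hr Hal Hbe Hga Hs.
  destruct (Req_dec ga 1) as [Hg1|Hg1].
  - replace al with 0 by lra; replace be with 0 by lra; subst ga.
    replace (_, _) with r by (destruct r; simpl; f_equal; ring). exact Hr.
  - set (l := be / (1 - ga)).
    assert (Hl : 0 <= l <= 1).
    { unfold l; split; [apply Rdiv_le_0_compat; lra|].
      apply Rmult_le_reg_r with (1 - ga); [lra|]. field_simplify; lra. }
    pose proof (HK p q Hp Hq l Hl) as Hm.
    assert (Hga1 : 0 <= ga <= 1) by lra.
    pose proof (HK _ r Hm Hr ga Hga1) as Hv; simpl in Hv.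
    replace (_, _) with ((1 - ga) * ((1 - l) * fst p + l * fst q) + ga * fst r,
                         (1 - ga) * ((1 - l) * snd p + l * snd q) + ga * snd r);
      [exact Hv|].
    replace al with (1 - be - ga) by lra; unfold l; f_equal; field; lra.
Qed.

Lemma ball_coords (p q : R * R) (e : R) :
  0 < e -> (fst q - fst p) ^ 2 + (snd q - snd p) ^ 2 < e ^ 2 ->
  Rabs (fst q - fst p) <= e /\ Rabs (snd q - snd p) <= e.
Proof.
  intros He Hq.
  pose proof (pow2_ge_0 (fst q - fst p)); pose proof (pow2_ge_0 (snd q - snd p)).
  assert ((fst q - fst p) ^ 2 < e ^ 2) by lra.
  assert ((snd q - snd p) ^ 2 < e ^ 2) by lra.
  split; left; apply Rabs_def1; nra.
Qed.

(* Cramer's rule writes [V - E1] in the frame [(E2 - E1, Z - E1)]; near an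
   inner point of the segment [E1 E2] the two coordinates stay close to
   [(mu, 0)], so only the sign of the second one can fail. *)
Lemma triangle_contains_half_ball (K : R * R -> Prop) (E1 E2 Z : R * R) (mu : R) :
  convex_set K -> K E1 -> K E2 -> K Z -> 0 < mu < 1 ->
  det2 (vsub E2 E1) (vsub Z E1) <> 0 ->
  exists e, 0 < e /\ forall V : R * R,
    (fst V - fst (along E1 (vsub E2 E1) mu)) ^ 2
      + (snd V - snd (along E1 (vsub E2 E1) mu)) ^ 2 < e ^ 2 ->
    0 <= det2 (vsub E2 E1) (vsub V E1) * det2 (vsub E2 E1) (vsub Z E1) ->
    K V.
Proof.
  intros HK H1 H2 HZ Hmu Hn.
  set (d := vsub E2 E1) in *; set (z := vsub Z E1) in *; set (n := det2 d z) in *.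
  set (m := Rmin mu (1 - mu)).
  set (S := 1 + Rabs (fst z) + Rabs (snd z) + Rabs (fst d) + Rabs (snd d)).
  assert (Hm : 0 < m) by (apply Rmin_glb_lt; lra).
  assert (Hm1 : m <= mu) by apply Rmin_l.
  assert (Hm2 : m <= 1 - mu) by apply Rmin_r.
  assert (HS : 0 < S).
  { unfold S; pose proof (Rabs_pos (fst z)); pose proof (Rabs_pos (snd z));
    pose proof (Rabs_pos (fst d)); pose proof (Rabs_pos (snd d)); lra. }
  assert (Han : 0 < Rabs n) by (apply Rabs_pos_lt; exact Hn).
  exists (m * Rabs n / (2 * S)); split; [apply Rdiv_lt_0_compat; nra|].
  intros V HV Hside.
  set (e := m * Rabs n / (2 * S)) in *.
  set (u := vsub V (along E1 d mu)).
  destruct (ball_coords _ V e ltac:(unfold e; apply Rdiv_lt_0_compat; nra) HV)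
    as [Hu1 Hu2].
  set (be := det2 (vsub V E1) z / n); set (ga := det2 d (vsub V E1) / n).
  assert (Ebe : be - mu = det2 u z / n)
    by (unfold be, u, n, d, z, det2, vsub, along; simpl; field; exact Hn).
  assert (Ega : ga = det2 d u / n)
    by (unfold ga, u, n, d, z, det2, vsub, along; simpl; field; exact Hn).
  assert (Hsmall : Rabs (be - mu) + Rabs ga <= m / 2).
  { rewrite Ebe, Ega, !Rabs_div, (Rabs_det2_comm d u) by exact Hn.
    pose proof (Rabs_det2_le u z e Hu1 Hu2); pose proof (Rabs_det2_le u d e Hu1 Hu2).
    apply (Rmult_le_reg_r (Rabs n)); [exact Han|].
    field_simplify; [|lra].
    assert (e * S = m * Rabs n / 2) by (unfold e; field; lra).
    pose proof (Rabs_pos (fst d)); pose proof (Rabs_pos (snd d)); unfold S in *; nra. }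
  assert (Hga : 0 <= ga).
  { unfold ga; replace (det2 d (vsub V E1) / n) with (det2 d (vsub V E1) * n / (n * n))
      by (field; exact Hn).
    apply Rdiv_le_0_compat; [exact Hside|]. destruct (Rlt_or_le 0 n); nra. }
  pose proof (Rle_abs (be - mu)); pose proof (Rle_abs (- (be - mu))).
  pose proof (Rle_abs ga); rewrite Rabs_Ropp in *.
  replace V with ((1 - be - ga) * fst E1 + be * fst E2 + ga * fst Z,
                  (1 - be - ga) * snd E1 + be * snd E2 + ga * snd Z).
  - apply convex_combination3; auto; lra.
  - unfold be, ga, n, d, z, det2, vsub; destruct V; simpl; f_equal; field; exact Hn.
Qed.

Lemma segment_interior_of_opposite_sides (K : R * R -> Prop) (E1 E2 Z Z' : R * R) (mu : R) :
  convex_set K -> K E1 -> K E2 -> K Z -> K Z' -> 0 < mu < 1 ->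
  det2 (vsub E2 E1) (vsub Z E1) * det2 (vsub E2 E1) (vsub Z' E1) < 0 ->
  interior_pt K (along E1 (vsub E2 E1) mu).
Proof.
  intros HK H1 H2 HZ HZ' Hmu Hopp.
  set (n := det2 (vsub E2 E1) (vsub Z E1)) in *.
  set (n' := det2 (vsub E2 E1) (vsub Z' E1)) in *.
  destruct (triangle_contains_half_ball K E1 E2 Z mu) as [e [He HB]]; auto.
  { intro h; fold n in h; rewrite h in Hopp; lra. }
  destruct (triangle_contains_half_ball K E1 E2 Z' mu) as [e' [He' HB']]; auto.
  { intro h; fold n' in h; rewrite h in Hopp; lra. }
  exists (Rmin e e'); split; [apply Rmin_glb_lt; auto|].
  intros V HV.
  assert (Hmin : Rmin e e' ^ 2 <= e ^ 2 /\ Rmin e e' ^ 2 <= e' ^ 2).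
  { assert (0 < Rmin e e') by (apply Rmin_glb_lt; auto).
    split; apply pow_incr; split; try lra; [apply Rmin_l | apply Rmin_r]. }
  set (g := det2 (vsub E2 E1) (vsub V E1)).
  destruct (Rle_or_lt 0 (g * n)) as [Hg|Hg].
  - apply HB; [lra | exact Hg].
  - apply HB'; [lra|]. fold g n'.
    assert (0 < (g * n) * (n * n')) by nra. nra.
Qed.

Lemma boundary_on_chord_supports (K : R * R -> Prop) (p w : R * R) (l1 l2 l : R) :
  convex_set K -> K (along p w l1) -> K (along p w l2) ->
  ~ interior_pt K (along p w l) -> 0 < (l - l1) * (l2 - l) ->
  forall Z Z', K Z -> K Z' -> 0 <= det2 w (vsub Z p) * det2 w (vsub Z' p).
Proof.
  intros HK H1 H2 Hl Hbetween Z Z' HZ HZ'.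
  apply Rnot_lt_le; intro Hopp.
  assert (Hd : l2 - l1 <> 0).
  { intro h; replace l2 with l1 in Hbetween by lra.
    pose proof (Rle_0_sqr (l - l1)); unfold Rsqr in *; nra. }
  apply Hl.
  replace (along p w l) with
    (along (along p w l1) (vsub (along p w l2) (along p w l1)) ((l - l1) / (l2 - l1)))
    by (unfold along, vsub; simpl; f_equal; field; exact Hd).
  apply segment_interior_of_opposite_sides with Z Z'; auto.
  - set (mu := (l - l1) / (l2 - l1)).
    assert (0 < mu * (1 - mu)).
    { replace (mu * (1 - mu)) with ((l - l1) * (l2 - l) / ((l2 - l1) * (l2 - l1)))
        by (unfold mu; field; exact Hd).
      apply Rdiv_lt_0_compat; nra. }
    nra.
  - replace (det2 _ (vsub Z _)) with ((l2 - l1) * det2 w (vsub Z p))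
      by (unfold det2, vsub, along; simpl; ring).
    replace (det2 _ (vsub Z' _)) with ((l2 - l1) * det2 w (vsub Z' p))
      by (unfold det2, vsub, along; simpl; ring).
    assert (0 < (l2 - l1) * (l2 - l1)) by nra. nra.
Qed.

Lemma collinear_boundary_points_support (K : R * R -> Prop) (A B C w : R * R) :
  convex_set K -> boundary_pt K A -> boundary_pt K B -> boundary_pt K C ->
  A <> B -> A <> C -> B <> C -> w <> (0, 0) ->
  det2 w (vsub B A) = 0 -> det2 w (vsub C A) = 0 ->
  forall Z Z', K Z -> K Z' -> 0 <= det2 w (vsub Z A) * det2 w (vsub Z' A).
Proof.
  intros HK [KA IA] [KB IB] [KC IC] HAB HAC HBC Hw HB HC.
  destruct (det2_eq0_along w A B Hw HB) as [lB ->].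
  destruct (det2_eq0_along w A C Hw HC) as [lC ->].
  assert (KA0 : K (along A w 0)) by (rewrite along_0; exact KA).
  assert (IA0 : ~ interior_pt K (along A w 0)) by (rewrite along_0; exact IA).
  assert (lB <> 0) by (intro; subst; apply HAB; symmetry; apply along_0).
  assert (lC <> 0) by (intro; subst; apply HAC; symmetry; apply along_0).
  assert (lB <> lC) by (intro; subst; auto).
  destruct (Rlt_dec 0 ((lB - 0) * (lC - lB))).
  { apply (boundary_on_chord_supports K A w 0 lC lB); auto. }
  destruct (Rlt_dec 0 ((lC - 0) * (lB - lC))).
  { apply (boundary_on_chord_supports K A w 0 lB lC); auto. }
  apply (boundary_on_chord_supports K A w lB lC 0); auto.
  destruct (Rlt_or_le 0 lB); destruct (Rlt_or_le 0 lC); nra.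
Qed.

(** * Calculus *)

Lemma abs_increment_le_of_derive (f g g' : R -> R) (p q : R) :
  p <= q ->
  (forall z, p <= z <= q -> is_derive g z (g' z)) ->
  (forall z, p <= z <= q -> exists d, is_derive f z d /\ Rabs d <= g' z) ->
  Rabs (f q - f p) <= g q - g p.
Proof.
  intros Hpq Hg Hf.
  assert (Hf' : forall z, p <= z <= q -> is_derive f z (Derive f z) /\ Rabs (Derive f z) <= g' z).
  { intros z Hz; destruct (Hf z Hz) as [d [Hd Hb]].
    rewrite (is_derive_unique f z d Hd); auto. }
  assert (Hcont : forall h h', (forall z, p <= z <= q -> is_derive h z (h' z)) ->
                  forall z, p <= z <= q -> continuity_pt h z).
  { intros h h' Hh z Hz; apply continuity_pt_filterlim, (ex_derive_continuous h).
    exists (h' z); auto. }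
  destruct (MVT_gen (fun z => g z - f z) p q (fun z => g' z - Derive f z)) as [c [Hc Ec]].
  { intros z Hz; rewrite Rmin_left, Rmax_right in Hz by lra.
    apply (is_derive_minus g f); [apply Hg | apply Hf']; lra. }
  { intros z Hz; rewrite Rmin_left, Rmax_right in Hz by lra.
    apply continuity_pt_minus; [apply (Hcont g g') | apply (Hcont f (Derive f))]; auto.
    intros; apply Hf'; auto. }
  destruct (MVT_gen (fun z => g z + f z) p q (fun z => g' z + Derive f z)) as [c' [Hc' Ec']].
  { intros z Hz; rewrite Rmin_left, Rmax_right in Hz by lra.
    apply (is_derive_plus g f); [apply Hg | apply Hf']; lra. }
  { intros z Hz; rewrite Rmin_left, Rmax_right in Hz by lra.
    apply continuity_pt_plus; [apply (Hcont g g') | apply (Hcont f (Derive f))]; auto.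
    intros; apply Hf'; auto. }
  rewrite Rmin_left, Rmax_right in Hc, Hc' by lra.
  destruct (Hf' c Hc) as [_ Bc]; destruct (Hf' c' Hc') as [_ Bc'].
  pose proof (Rle_abs (Derive f c)); pose proof (Rle_abs (- Derive f c')).
  rewrite Rabs_Ropp in *.
  assert (0 <= (g' c - Derive f c) * (q - p)) by (apply Rmult_le_pos; lra).
  assert (0 <= (g' c' + Derive f c') * (q - p)) by (apply Rmult_le_pos; lra).
  apply Rabs_le; lra.
Qed.

Lemma is_derive_zero_of_locally_zero (f : R -> R) (p q t l : R) :
  p < t < q -> (forall r, p < r < q -> f r = 0) -> is_derive f t l -> l = 0.
Proof.
  intros Ht Hf Hd.
  assert (He : 0 < Rmin (t - p) (q - t)) by (apply Rmin_glb_lt; lra).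
  assert (Hd0 : is_derive (fun _ => 0) t l).
  { apply (is_derive_ext_loc f); [|exact Hd].
    exists (mkposreal _ He); intros r Hr.
    change (Rabs (r - t) < Rmin (t - p) (q - t)) in Hr.
    pose proof (Rmin_l (t - p) (q - t)); pose proof (Rmin_r (t - p) (q - t)).
    apply Rabs_def2 in Hr; apply Hf; lra. }
  apply is_derive_unique in Hd0; rewrite Derive_const in Hd0; auto.
Qed.

Lemma crossing_point (g : R -> R) (p q : R) :
  p < q -> (forall r, p <= r <= q -> continuous g r) -> g p * g q < 0 ->
  exists r, p < r < q /\ g r = 0.
Proof.
  intros Hpq Hg Hsign.
  assert (Hc : forall h, (forall r, p <= r <= q -> continuous h r) ->
                forall r, p <= r <= q -> continuity_pt h r)
    by (intros h Hh r Hr; apply continuity_pt_filterlim, Hh, Hr).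
  assert (Hp0 : g p <> 0) by (intro h; rewrite h in Hsign; lra).
  assert (Hq0 : g q <> 0) by (intro h; rewrite h in Hsign; lra).
  enough (exists r, p <= r <= q /\ g r = 0) as [r [Hr Hgr]].
  { exists r; split; [|exact Hgr].
    assert (r <> p) by (intro; subst; auto); assert (r <> q) by (intro; subst; auto); lra. }
  destruct (Rlt_or_le (g p) 0) as [Hp|Hp].
  - destruct (IVT_interv g p q (Hc g Hg) Hpq Hp ltac:(nra)) as [r Hr]; exists r; exact Hr.
  - assert (Hg' : forall r, p <= r <= q -> continuous (fun r => - g r) r)
      by (intros r Hr; apply (continuous_opp g), Hg, Hr).
    destruct (IVT_interv (fun r => - g r) p q (Hc _ Hg') Hpq ltac:(nra) ltac:(nra))
      as [r [Hr Hgr]].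
    exists r; split; [exact Hr | lra].
Qed.

(* Clamping to [[a, b]] extends a function continuous on [[a, b]] to a function
   continuous everywhere, which is what [is_derive_RInt] needs at the ends. *)
Definition clamp (a b t : R) : R := Rmax a (Rmin b t).

Lemma clamp_in (a b t : R) : a <= b -> a <= clamp a b t <= b.
Proof. intros; unfold clamp, Rmax, Rmin; repeat destruct Rle_dec; lra. Qed.

Lemma clamp_id (a b t : R) : a <= t <= b -> clamp a b t = t.
Proof. intros; unfold clamp, Rmax, Rmin; repeat destruct Rle_dec; lra. Qed.

Lemma clamp_lipschitz (a b s t : R) : a <= b -> Rabs (clamp a b s - clamp a b t) <= Rabs (s - t).
Proof.
  intros; unfold clamp, Rmax, Rmin; repeat destruct Rle_dec;
    unfold Rabs; repeat destruct Rcase_abs; lra.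
Qed.

Lemma continuous_clamp_comp (f : R -> R) (a b : R) :
  a <= b -> (forall t, a <= t <= b -> continuous f t) ->
  forall t, continuous (fun r => f (clamp a b r)) t.
Proof.
  intros Hab Hf t; apply continuous_comp; [|apply Hf, clamp_in, Hab].
  apply continuity_pt_filterlim; intros eps Heps; exists eps; split; [exact Heps|].
  intros z [_ Hz]; unfold R_dist in *; simpl.
  eapply Rle_lt_trans; [apply clamp_lipschitz, Hab | exact Hz].
Qed.

(** * Regular arcs *)

Definition arclen (x y : R -> R) (a b t : R) : R :=
  RInt (fun r => speed x y (clamp a b r)) a t.

Definition tangent (x y : R -> R) (t : R) : R * R :=
  (Derive x t / speed x y t, Derive y t / speed x y t).

Section RegularArc.

Variables (x y : R -> R) (a b : R).
Hypothesis Hab : a <= b.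
Hypothesis Hreg : C2_regular x y a b.

Lemma speed_sqr (t : R) : a <= t <= b -> speed x y t ^ 2 = Derive x t ^ 2 + Derive y t ^ 2.
Proof.
  intros Ht; unfold speed; rewrite pow2_sqrt; [reflexivity|].
  pose proof (pow2_ge_0 (Derive x t)); pose proof (pow2_ge_0 (Derive y t)); lra.
Qed.

Lemma speed_pos (t : R) : a <= t <= b -> 0 < speed x y t.
Proof.
  intros Ht; unfold speed; apply sqrt_lt_R0.
  destruct (Hreg t Ht) as (_ & _ & _ & _ & _ & _ & Hv).
  pose proof (pow2_ge_0 (Derive x t)); pose proof (pow2_ge_0 (Derive y t)); lra.
Qed.

Lemma continuous_speed (t : R) : a <= t <= b -> continuous (speed x y) t.
Proof.
  intros Ht; apply (ex_derive_continuous (speed x y)); unfold speed.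
  destruct (Hreg t Ht) as (_ & _ & Hx & Hy & _).
  pose proof (speed_pos t Ht) as Hs; unfold speed in Hs.
  assert (0 < Derive x t ^ 2 + Derive y t ^ 2) by (apply sqrt_lt_0_alt; rewrite sqrt_0; exact Hs).
  auto_derive; repeat split; auto.
Qed.

Lemma is_derive_arclen (t : R) : a <= t <= b -> is_derive (arclen x y a b) t (speed x y t).
Proof.
  intros Ht.
  assert (Hc : forall r, continuous (fun r => speed x y (clamp a b r)) r)
    by (apply continuous_clamp_comp; [exact Hab | exact continuous_speed]).
  rewrite <- (clamp_id a b t) at 2 by exact Ht.
  apply (is_derive_RInt (fun r => speed x y (clamp a b r)) (arclen x y a b) a); [|apply Hc].
  exists (mkposreal 1 Rlt_0_1); intros z _.
  apply (RInt_correct (V := R_CompleteNormedModule)).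
  apply (ex_RInt_continuous (V := R_CompleteNormedModule)); intros; apply Hc.
Qed.

Lemma arclen_lt (p q : R) : a <= p -> p < q -> q <= b -> arclen x y a b p < arclen x y a b q.
Proof.
  intros Hp Hpq Hq.
  apply (incr_function_le (arclen x y a b) p q (speed x y)); simpl; try lra.
  - intros z Hz1 Hz2; apply is_derive_arclen; lra.
  - intros z Hz1 Hz2; apply speed_pos; lra.
Qed.

Lemma arclen_le (p q : R) : a <= p -> p <= q -> q <= b -> arclen x y a b p <= arclen x y a b q.
Proof.
  intros Hp Hpq Hq; destruct (Req_dec p q) as [->|Hne]; [lra|].
  left; apply arclen_lt; lra.
Qed.

Lemma curve_length_arclen : curve_length x y a b = arclen x y a b b - arclen x y a b a.
Proof.
  unfold curve_length, arclen; rewrite RInt_point, Rminus_0_r.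
  apply RInt_ext; intros z Hz.
  rewrite Rmin_left, Rmax_right in Hz by exact Hab.
  rewrite clamp_id; [reflexivity | lra].
Qed.

Lemma det2_velocity (c : R * R) (t : R) :
  a <= t <= b -> det2 c (Derive x t, Derive y t) = speed x y t * det2 c (tangent x y t).
Proof.
  intros Ht; pose proof (speed_pos t Ht).
  unfold det2, tangent; simpl; field; lra.
Qed.

Lemma tangent_unit (t : R) :
  a <= t <= b -> fst (tangent x y t) ^ 2 + snd (tangent x y t) ^ 2 = 1.
Proof.
  intros Ht; pose proof (speed_pos t Ht) as Hs; pose proof (speed_sqr t Ht) as Hs2.
  unfold tangent; simpl; field_simplify; [|lra]. rewrite <- Hs2; field; lra.
Qed.

Lemma dot_velocity_le (c : R * R) (t : R) :
  a <= t <= b -> fst c ^ 2 + snd c ^ 2 = 1 ->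
  Rabs (fst c * Derive x t + snd c * Derive y t) <= speed x y t.
Proof.
  intros Ht Hc; pose proof (speed_pos t Ht); pose proof (speed_sqr t Ht).
  apply Rsqr_incr_0_var; [|lra]; rewrite <- Rsqr_abs; unfold Rsqr.
  pose proof (pow2_ge_0 (fst c * Derive y t - snd c * Derive x t)); nra.
Qed.

Lemma is_derive_det2_point (c o : R * R) (t : R) :
  a <= t <= b ->
  is_derive (fun r => det2 c (vsub (x r, y r) o)) t (det2 c (Derive x t, Derive y t)).
Proof.
  intros Ht; destruct (Hreg t Ht) as (Hx & Hy & _).
  unfold det2, vsub; simpl; auto_derive; auto.
  change (Derive (fun z => x z) t) with (Derive x t).
  change (Derive (fun z => y z) t) with (Derive y t); ring.
Qed.

(* The tangent turns at rate [curvature * speed] along the unit normal. *)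
Lemma is_derive_det2_tangent (c : R * R) (t : R) :
  a <= t <= b ->
  is_derive (fun r => det2 c (tangent x y r)) t
    (curvature x y t * (fst c * Derive x t + snd c * Derive y t)).
Proof.
  intros Ht; destruct (Hreg t Ht) as (_ & _ & Hx & Hy & _).
  pose proof (speed_pos t Ht) as Hs; pose proof (speed_sqr t Ht) as Hs2.
  unfold speed in Hs, Hs2.
  assert (0 < Derive x t ^ 2 + Derive y t ^ 2) by (apply sqrt_lt_0_alt; rewrite sqrt_0; exact Hs).
  unfold det2, tangent, curvature, speed; simpl.
  assert (E : Derive x t * (Derive x t * 1) + Derive y t * (Derive y t * 1)
               = Derive x t ^ 2 + Derive y t ^ 2) by ring.
  auto_derive; rewrite E; [repeat split; auto; lra|].
  change (Derive (fun z => Derive x z) t) with (Derive (Derive x) t).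
  change (Derive (fun z => Derive y z) t) with (Derive (Derive y) t).
  set (q := sqrt (Derive x t ^ 2 + Derive y t ^ 2)) in *.
  apply Rminus_diag_uniq.
  transitivity ((q ^ 2 - (Derive x t ^ 2 + Derive y t ^ 2))
                * (fst c * Derive (Derive y) t - snd c * Derive (Derive x) t) / q ^ 3);
    [field; lra | rewrite Hs2; unfold Rdiv; ring].
Qed.

Variable k : R.
Hypothesis Hk : forall t, a <= t <= b -> Rabs (curvature x y t) <= k.

Lemma det2_tangent_le (r t : R) :
  a <= r -> r <= t -> t <= b ->
  Rabs (det2 (tangent x y r) (tangent x y t)) <= k * (arclen x y a b t - arclen x y a b r).
Proof.
  intros Hr Hrt Ht; set (c := tangent x y r).
  assert (Hc : fst c ^ 2 + snd c ^ 2 = 1) by (apply tangent_unit; lra).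
  replace (det2 c (tangent x y t)) with (det2 c (tangent x y t) - det2 c (tangent x y r))
    by (unfold c, det2; ring).
  rewrite Rmult_minus_distr_l.
  apply (abs_increment_le_of_derive (fun z => det2 c (tangent x y z))
           (fun z => k * arclen x y a b z) (fun z => k * speed x y z)); [exact Hrt| |].
  - intros z Hz; apply is_derive_scal, is_derive_arclen; lra.
  - intros z Hz; eexists; split; [apply is_derive_det2_tangent; lra|].
    rewrite Rabs_mult; apply Rmult_le_compat; try apply Rabs_pos.
    + apply Hk; lra.
    + apply dot_velocity_le; [lra | exact Hc].
Qed.

Lemma det2_chord_tangent_le (s t r : R) :
  a <= s -> s <= t -> t <= r -> r <= b ->
  Rabs (det2 (vsub (x t, y t) (x s, y s)) (tangent x y r))
    <= k * ((arclen x y a b r - arclen x y a b s) ^ 2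
            - (arclen x y a b r - arclen x y a b t) ^ 2) / 2.
Proof.
  intros Hs Hst Htr Hr; set (c := tangent x y r); set (L := arclen x y a b).
  rewrite Rabs_det2_comm.
  replace (det2 c (vsub (x t, y t) (x s, y s)))
    with (det2 c (vsub (x t, y t) (x s, y s)) - det2 c (vsub (x s, y s) (x s, y s)))
    by (unfold det2, vsub; simpl; ring).
  replace (k * ((L r - L s) ^ 2 - (L r - L t) ^ 2) / 2)
    with (- k * (L r - L t) ^ 2 / 2 - - k * (L r - L s) ^ 2 / 2) by field.
  apply (abs_increment_le_of_derive (fun z => det2 c (vsub (x z, y z) (x s, y s)))
           (fun z => - k * (L r - L z) ^ 2 / 2) (fun z => k * (L r - L z) * speed x y z));
    [exact Hst| |].
  - intros z Hz; pose proof (is_derive_arclen z ltac:(lra)) as Hd.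
    unfold L; auto_derive; [repeat split; exists (speed x y z); exact Hd|].
    change (Derive (fun v => arclen x y a b v) z) with (Derive (arclen x y a b) z).
    rewrite (is_derive_unique _ _ _ Hd); field.
  - intros z Hz; assert (Hz' : a <= z <= b) by lra; pose proof (speed_pos z Hz').
    eexists; split; [apply is_derive_det2_point, Hz'|].
    rewrite det2_velocity, Rabs_mult, Rabs_det2_comm, (Rabs_pos_eq (speed x y z)) by lra.
    rewrite Rmult_comm.
    apply Rmult_le_compat_r; [lra|].
    apply det2_tangent_le; lra.
Qed.

Lemma det2_chord_le (s t u : R) :
  a <= s -> s <= t -> t <= u -> u <= b ->
  Rabs (orient (x s, y s) (x t, y t) (x u, y u))
    <= k * ((arclen x y a b t - arclen x y a b s) * (arclen x y a b u - arclen x y a b t)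
            * (arclen x y a b u - arclen x y a b s)) / 2.
Proof.
  intros Hs Hst Htu Hu; unfold orient.
  set (w := vsub (x t, y t) (x s, y s)); set (L := arclen x y a b).
  replace (det2 w (vsub (x u, y u) (x s, y s)))
    with (det2 w (vsub (x u, y u) (x s, y s)) - det2 w (vsub (x t, y t) (x s, y s)))
    by (unfold w, det2, vsub; simpl; ring).
  replace (k * ((L t - L s) * (L u - L t) * (L u - L s)) / 2)
    with (k * ((L u - L s) ^ 3 - (L u - L t) ^ 3) / 6
          - k * ((L t - L s) ^ 3 - (L t - L t) ^ 3) / 6) by field.
  apply (abs_increment_le_of_derive (fun z => det2 w (vsub (x z, y z) (x s, y s)))
           (fun z => k * ((L z - L s) ^ 3 - (L z - L t) ^ 3) / 6)
           (fun z => k * ((L z - L s) ^ 2 - (L z - L t) ^ 2) / 2 * speed x y z));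
    [exact Htu| |].
  - intros z Hz; pose proof (is_derive_arclen z ltac:(lra)) as Hd.
    unfold L; auto_derive; [repeat split; exists (speed x y z); exact Hd|].
    change (Derive (fun v => arclen x y a b v) z) with (Derive (arclen x y a b) z).
    rewrite (is_derive_unique _ _ _ Hd); field.
  - intros z Hz; assert (Hz' : a <= z <= b) by lra; pose proof (speed_pos z Hz').
    eexists; split; [apply is_derive_det2_point, Hz'|].
    rewrite det2_velocity, Rabs_mult, (Rabs_pos_eq (speed x y z)) by lra.
    rewrite Rmult_comm.
    apply Rmult_le_compat_r; [lra|].
    apply det2_chord_tangent_le; lra.
Qed.

End RegularArc.

(** * Convex arcs *)

Section ConvexArc.

Variables (x y : R -> R) (a b : R) (K : R * R -> Prop).
Hypothesis Hreg : C2_regular x y a b.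
Hypothesis Hcurv : forall t, a <= t <= b -> curvature x y t <> 0.
Hypothesis Hinj : forall s t, a <= s <= b -> a <= t <= b -> (x s, y s) = (x t, y t) -> s = t.
Hypothesis HK : convex_set K.
Hypothesis Hbd : forall t, a <= t <= b -> boundary_pt K (x t, y t).

(* On a subinterval where the arc stays on a line, both velocity and
   acceleration are parallel to that line, which kills the curvature. *)
Lemma curve_leaves_line (w o : R * R) (p q : R) :
  w <> (0, 0) -> a <= p -> p < q -> q <= b ->
  exists r, p < r < q /\ det2 w (vsub (x r, y r) o) <> 0.
Proof.
  intros Hw Hp Hpq Hq; apply NNPP; intro Hno.
  assert (Hon : forall r, p < r < q -> det2 w (vsub (x r, y r) o) = 0)
    by (intros r Hr; apply NNPP; intro; apply Hno; eauto).
  assert (Hvel : forall r, p < r < q -> det2 w (Derive x r, Derive y r) = 0).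
  { intros r Hr; apply (is_derive_zero_of_locally_zero _ p q r _ Hr Hon).
    apply (is_derive_det2_point x y a b Hreg); lra. }
  set (m := (p + q) / 2).
  assert (Hm : a <= m <= b) by (unfold m; lra).
  assert (Hacc : det2 w (Derive (Derive x) m, Derive (Derive y) m) = 0).
  { apply (is_derive_zero_of_locally_zero (fun r => det2 w (Derive x r, Derive y r)) p q m);
      [unfold m; lra | exact Hvel|].
    destruct (Hreg m Hm) as (_ & _ & Hx & Hy & _).
    unfold det2; simpl; auto_derive; auto.
    change (Derive (fun z => Derive x z) m) with (Derive (Derive x) m).
    change (Derive (fun z => Derive y z) m) with (Derive (Derive y) m); ring. }
  apply (Hcurv m Hm); unfold curvature.
  change (Derive x m * Derive (Derive y) m - Derive y m * Derive (Derive x) m)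
    with (det2 (Derive x m, Derive y m) (Derive (Derive x) m, Derive (Derive y) m)).
  rewrite (det2_parallel w _ _ Hw (Hvel m ltac:(unfold m; lra)) Hacc).
  unfold Rdiv; ring.
Qed.

Lemma curve_point_neq (s t : R) :
  a <= s <= b -> a <= t <= b -> s <> t -> (x s, y s) <> (x t, y t).
Proof. intros Hs Ht Hst E; apply Hst, Hinj; auto. Qed.

Lemma curve_on_one_side (w : R * R) (p q r : R) :
  w <> (0, 0) -> a <= p <= b -> a <= q <= b -> a <= r <= b ->
  p <> q -> p <> r -> q <> r ->
  det2 w (vsub (x q, y q) (x p, y p)) = 0 -> det2 w (vsub (x r, y r) (x p, y p)) = 0 ->
  forall s t, a <= s <= b -> a <= t <= b ->
  0 <= det2 w (vsub (x s, y s) (x p, y p)) * det2 w (vsub (x t, y t) (x p, y p)).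
Proof.
  intros Hw Hp Hq Hr Hpq Hpr Hqr Hcq Hcr s t Hs Ht.
  apply (collinear_boundary_points_support K _ (x q, y q) (x r, y r)); auto;
    try (apply curve_point_neq; auto); apply Hbd; auto.
Qed.

Lemma curve_leaves_chord_same_side (s t u : R) :
  a <= s -> s < t -> t < u -> u <= b -> orient (x s, y s) (x t, y t) (x u, y u) = 0 ->
  exists t1 t2, s < t1 < t /\ t < t2 < u /\
    orient (x s, y s) (x t, y t) (x t1, y t1) <> 0 /\
    0 < orient (x s, y s) (x t, y t) (x t2, y t2) * orient (x s, y s) (x t, y t) (x t1, y t1).
Proof.
  intros Hs Hst Htu Hu Hcol; unfold orient in *.
  set (w := vsub (x t, y t) (x s, y s)) in *.
  assert (Hw : w <> (0, 0)) by (apply vsub_neq0, curve_point_neq; lra).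
  assert (Hside := curve_on_one_side w s t u Hw ltac:(lra) ltac:(lra) ltac:(lra)
                     ltac:(lra) ltac:(lra) ltac:(lra)
                     ltac:(unfold w, det2, vsub; simpl; ring) Hcol).
  destruct (curve_leaves_line w (x s, y s) s t) as [t1 [Ht1 Hd1]]; auto; try lra.
  destruct (curve_leaves_line w (x s, y s) t u) as [t2 [Ht2 Hd2]]; auto; try lra.
  exists t1, t2; split; [lra|]; split; [lra|]; split; [exact Hd1|].
  destruct (Hside t2 t1 ltac:(lra) ltac:(lra)) as [h|h]; [exact h|].
  symmetry in h; apply Rmult_integral in h; tauto.
Qed.

(* A line through three points of the arc supports it, and the arc leaves the
   line to one side between those points; a parallel line close enough to it
   then meets the arc in three points too, while the arc has points strictly on
   both of its sides. *)
Lemma curve_points_not_collinear (s t u : R) :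
  a <= s -> s < t -> t < u -> u <= b -> orient (x s, y s) (x t, y t) (x u, y u) <> 0.
Proof.
  intros Hs Hst Htu Hu Hcol.
  destruct (curve_leaves_chord_same_side s t u Hs Hst Htu Hu Hcol)
    as [t1 [t2 [Ht1 [Ht2 [Hd Hd2d]]]]].
  set (w := vsub (x t, y t) (x s, y s)).
  set (D := fun r => det2 w (vsub (x r, y r) (x s, y s))).
  change (D t1 <> 0) in Hd; change (0 < D t2 * D t1) in Hd2d; set (d := D t1) in *.
  assert (Ds : D s = 0) by (unfold D, w, det2, vsub; simpl; ring).
  assert (Dt : D t = 0) by (unfold D, w, det2, vsub; simpl; ring).
  assert (Hdd : 0 < d * d) by (destruct (Rlt_or_le 0 d); nra).
  set (eps := Rmin (d * d) (D t2 * d) / 2).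
  assert (Heps : 0 < eps /\ eps < d * d /\ eps < D t2 * d).
  { pose proof (Rmin_l (d * d) (D t2 * d)); pose proof (Rmin_r (d * d) (D t2 * d)).
    assert (0 < Rmin (d * d) (D t2 * d)) by (apply Rmin_glb_lt; auto).
    unfold eps; lra. }
  set (g := fun r => D r * d - eps).
  assert (Hg : forall p q, a <= p -> p < q -> q <= b -> g p * g q < 0 ->
                 exists r, p < r < q /\ D r * d = eps).
  { intros p q Hp Hpq Hq Hpq'; destruct (crossing_point g p q Hpq) as [r [Hr Hgr]];
      [|exact Hpq'|exists r; split; [exact Hr | unfold g in Hgr; lra]].
    intros r Hr; destruct (Hreg r ltac:(lra)) as (Hx & Hy & _).
    apply (ex_derive_continuous g); unfold g, D, det2, vsub; simpl.
    auto_derive; auto. }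
  destruct (Hg s t1) as [r1 [Hr1 E1]]; try lra; [unfold g; cbv beta; rewrite Ds; fold d; nra|].
  destruct (Hg t1 t) as [r2 [Hr2 E2]]; try lra; [unfold g; cbv beta; rewrite Dt; fold d; nra|].
  destruct (Hg t t2) as [r3 [Hr3 E3]]; try lra; [unfold g; cbv beta; rewrite Dt; fold d; nra|].
  assert (Hd0 : d <> 0) by (intro h; rewrite h in Hdd; lra).
  assert (Hlevel : forall r, D r * d = eps -> det2 w (vsub (x r, y r) (x r1, y r1)) = 0).
  { intros r Er; replace (det2 w (vsub (x r, y r) (x r1, y r1))) with (D r - D r1)
      by (unfold D, det2, vsub; simpl; ring).
    apply (Rmult_eq_reg_r d); [lra | exact Hd0]. }
  assert (Hw : w <> (0, 0)) by (apply vsub_neq0, curve_point_neq; lra).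
  pose proof (curve_on_one_side w r1 r2 r3 Hw ltac:(lra) ltac:(lra) ltac:(lra)
                ltac:(lra) ltac:(lra) ltac:(lra) (Hlevel r2 E2) (Hlevel r3 E3)
                s t1 ltac:(lra) ltac:(lra)) as Hsup.
  replace (det2 w (vsub (x s, y s) (x r1, y r1))) with (D s - D r1) in Hsup
    by (unfold D, det2, vsub; simpl; ring).
  replace (det2 w (vsub (x t1, y t1) (x r1, y r1))) with (d - D r1) in Hsup
    by (unfold d, D, det2, vsub; simpl; ring).
  rewrite Ds in Hsup.
  assert (Hprod : 0 <= (0 - D r1) * (d - D r1) * (d * d)) by (apply Rmult_le_pos; lra).
  replace ((0 - D r1) * (d - D r1) * (d * d)) with (- (D r1 * d) * (d * d - D r1 * d)) in Hprod
    by ring.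
  rewrite E1 in Hprod; nra.
Qed.

End ConvexArc.

(** * Lattice points *)

Lemma lattice_orient_multiple (v0 v1 v2 P Q S : R * R) :
  in_lattice v0 v1 v2 P -> in_lattice v0 v1 v2 Q -> in_lattice v0 v1 v2 S ->
  exists k : Z, orient P Q S = IZR k * det2 v1 v2.
Proof.
  intros [mP [nP [P1 P2]]] [mQ [nQ [Q1 Q2]]] [mS [nS [S1 S2]]].
  exists ((mQ - mP) * (nS - nP) - (nQ - nP) * (mS - mP))%Z.
  unfold orient, det2, vsub; simpl; rewrite P1, P2, Q1, Q2, S1, S2.
  rewrite minus_IZR, !mult_IZR, !minus_IZR; ring.
Qed.

Lemma lattice_invariant_le_orient (v0 v1 v2 P Q S : R * R) :
  in_lattice v0 v1 v2 P -> in_lattice v0 v1 v2 Q -> in_lattice v0 v1 v2 S ->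
  orient P Q S <> 0 -> lattice_invariant v1 v2 <= Rabs (orient P Q S).
Proof.
  intros HP HQ HS Hn; destruct (lattice_orient_multiple v0 v1 v2 P Q S HP HQ HS) as [k Hk].
  rewrite Hk in *; unfold lattice_invariant; rewrite Rabs_mult.
  assert (k <> 0%Z) by (intro; subst; apply Hn; simpl; ring).
  assert (1 <= Rabs (IZR k)) by (rewrite <- abs_IZR; apply IZR_le; lia).
  pose proof (Rabs_pos (det2 v1 v2)); nra.
Qed.

Lemma NoDup_split_max (ts : list R) :
  NoDup ts -> ts <> nil ->
  exists u ts', In u ts /\ NoDup ts' /\ length ts = S (length ts') /\
    forall z, In z ts' -> In z ts /\ z < u.
Proof.
  intros Hnd Hne.
  assert (Hu : In (MaxRlist ts) ts)
    by (apply MaxRlist_P2; destruct ts as [|t ts]; [congruence | exists t; left; auto]).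
  pose proof (MaxRlist_P1 ts) as Hmax.
  set (u := MaxRlist ts) in *; clearbody u.
  destruct (in_split _ _ Hu) as [l1 [l2 ->]].
  exists u, (l1 ++ l2); split; [exact Hu|].
  split; [eapply NoDup_remove_1; eauto|].
  split; [rewrite !length_app; simpl; lia|].
  intros z Hz; assert (Hzts : In z (l1 ++ u :: l2))
    by (apply in_app_or in Hz; apply in_or_app; simpl; tauto).
  split; [exact Hzts|].
  destruct (Hmax z Hzts) as [Hlt|Heq]; [exact Hlt|].
  exfalso; apply (NoDup_remove_2 _ _ _ Hnd); rewrite <- Heq; exact Hz.
Qed.

(* If any three of the points span at least [2 c] in the [f]-scale, grouping
   them as [p1 < p2 < p3 <= p4 < p5 <= ...] shows that [n] points span more
   than [(n - 2) c]. *)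
Lemma spread_of_spaced_points (P : R -> Prop) (f : R -> R) (c : R) :
  0 < c ->
  (forall p q, P p -> P q -> p < q -> f p < f q) ->
  (forall s t u, P s -> P t -> P u -> s < t -> t < u -> 2 * c <= f u - f s) ->
  forall ts, NoDup ts -> ts <> nil -> (forall t, In t ts -> P t) ->
  exists lo hi, In lo ts /\ In hi ts /\ c * (INR (length ts) - 2) < f hi - f lo.
Proof.
  intros Hc Hmono Hspaced ts.
  remember (length ts) as n eqn:Hn; revert ts Hn.
  induction n as [n IH] using lt_wf_ind; intros ts Hn Hnd Hne HP.
  destruct (NoDup_split_max ts Hnd Hne) as [u [ts' [Hu [Hnd' [Hlen' Hts']]]]].
  destruct ts' as [|t0 ts0] eqn:E'.
  { exists u, u; split; [exact Hu|split; [exact Hu|]].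
    rewrite Hn, Hlen'; simpl; lra. }
  rewrite <- E' in *.
  assert (Hne' : ts' <> nil) by (rewrite E'; discriminate).
  destruct (NoDup_split_max ts' Hnd' Hne') as [t [ts'' [Ht [Hnd'' [Hlen'' Hts'']]]]].
  destruct (Hts' t Ht) as [Htts Htu].
  destruct ts'' as [|r0 rs0] eqn:E''.
  { exists t, u; split; [exact Htts|split; [exact Hu|]].
    pose proof (Hmono t u (HP t Htts) (HP u Hu) Htu).
    rewrite Hn, Hlen', Hlen''; simpl; lra. }
  rewrite <- E'' in *.
  assert (Hne'' : ts'' <> nil) by (rewrite E''; discriminate).
  assert (Hin : forall z, In z ts'' -> In z ts /\ z < t)
    by (intros z Hz; destruct (Hts'' z Hz) as [Hz' Hzt]; split; [apply Hts' |]; auto).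
  destruct (IH (length ts'')) with (ts := ts'') as [lo [hi [Hlo [Hhi Hspread]]]];
    auto; [lia | intros z Hz; apply HP, Hin, Hz |].
  destruct (Hin lo Hlo) as [Hlots _]; destruct (Hin hi Hhi) as [Hhits Hhit].
  pose proof (Hspaced hi t u (HP hi Hhits) (HP t Htts) (HP u Hu) Hhit Htu).
  exists lo, u; split; [exact Hlots|split; [exact Hu|]].
  rewrite Hn, Hlen', Hlen'', !S_INR; lra.
Qed.

Lemma cube_root_pos (z : R) : 0 < z -> 0 < Rpower z (1 / 3).
Proof. intros; unfold Rpower; apply exp_pos. Qed.

Lemma cube_root_cube (z : R) : 0 < z -> Rpower z (1 / 3) ^ 3 = z.
Proof.
  intros Hz; rewrite <- (Rpower_pow 3 _ (cube_root_pos z Hz)), Rpower_mult.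
  replace (1 / 3 * INR 3) with 1 by (simpl; field); apply Rpower_1, Hz.
Qed.

Lemma sum_ge_of_product_ge (l1 l2 c : R) :
  0 < l1 -> 0 < l2 -> 0 < c -> 2 * c ^ 3 <= l1 * l2 * (l1 + l2) -> 2 * c <= l1 + l2.
Proof.
  intros H1 H2 Hc Hprod.
  apply Rnot_lt_le; intro Hlt.
  assert (Hamgm : 4 * (l1 * l2) <= (l1 + l2) ^ 2)
    by (pose proof (pow2_ge_0 (l1 - l2)); nra).
  assert (Hsq : (l1 + l2) * (l1 + l2) < (2 * c) * (2 * c))
    by (apply Rmult_le_0_lt_compat; lra).
  assert ((l1 + l2) * (l1 + l2) * (l1 + l2) < (2 * c) * (2 * c) * (2 * c))
    by (apply Rmult_le_0_lt_compat; nra).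
  assert (4 * (l1 * l2) * (l1 + l2) <= (l1 + l2) ^ 2 * (l1 + l2))
    by (apply Rmult_le_compat_r; lra).
  nra.
Qed.

Lemma on_curve_params (x y : R -> R) (a b : R) (pts : list (R * R)) :
  (forall p, In p pts -> on_curve x y a b p) ->
  exists ts, map (fun t => (x t, y t)) ts = pts /\ forall t, In t ts -> a <= t <= b.
Proof.
  induction pts as [|p pts IH]; intros Hp; [exists nil; split; [reflexivity | intros t []]|].
  destruct (Hp p (or_introl eq_refl)) as [t [Ht ->]].
  destruct IH as [ts [Hm Hts]]; [intros q Hq; apply Hp; right; exact Hq|].
  exists (t :: ts); split; [simpl; rewrite Hm; reflexivity|].
  intros z [<-|Hz]; auto.
Qed.

Lemma lattice_triple_arclength_ge (x y : R -> R) (a b R1 : R) (v0 v1 v2 : R * R) :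
  open_convex_curve x y a b -> 0 < R1 ->
  (forall t, a <= t <= b -> Rabs (curvature x y t) <= / R1) ->
  det2 v1 v2 <> 0 ->
  forall s t u, a <= s -> s < t -> t < u -> u <= b ->
  in_lattice v0 v1 v2 (x s, y s) -> in_lattice v0 v1 v2 (x t, y t) ->
  in_lattice v0 v1 v2 (x u, y u) ->
  2 * Rpower (lattice_invariant v1 v2 * R1) (1 / 3) <= arclen x y a b u - arclen x y a b s.
Proof.
  intros (Hab & Hreg & Hcurv & Hinj & K & HK & Hbd) HR Hk Hdet s t u Hs Hst Htu Hu Ls Lt Lu.
  assert (HA : 0 < lattice_invariant v1 v2 * R1)
    by (apply Rmult_lt_0_compat; [apply Rabs_pos_lt, Hdet | exact HR]).
  pose proof (lattice_invariant_le_orient v0 v1 v2 _ _ _ Ls Lt Lu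
                (curve_points_not_collinear x y a b K Hreg Hcurv Hinj HK Hbd s t u Hs Hst Htu Hu))
    as Hlow.
  pose proof (det2_chord_le x y a b ltac:(lra) Hreg (/ R1) Hk s t u Hs ltac:(lra) ltac:(lra) Hu)
    as Hup.
  pose proof (arclen_lt x y a b ltac:(lra) Hreg s t Hs Hst ltac:(lra)).
  pose proof (arclen_lt x y a b ltac:(lra) Hreg t u ltac:(lra) Htu Hu).
  replace (arclen x y a b u - arclen x y a b s)
    with ((arclen x y a b t - arclen x y a b s) + (arclen x y a b u - arclen x y a b t)) by ring.
  apply sum_ge_of_product_ge; try lra; [apply cube_root_pos, HA|].
  rewrite cube_root_cube by exact HA.
  replace (arclen x y a b t - arclen x y a b s + (arclen x y a b u - arclen x y a b t))
    with (arclen x y a b u - arclen x y a b s) by ring.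
  apply (Rmult_le_reg_r (/ R1)); [apply Rinv_0_lt_compat, HR|].
  replace (2 * (lattice_invariant v1 v2 * R1) * / R1) with (2 * lattice_invariant v1 v2)
    by (field; lra).
  lra.
Qed.

Lemma lattice_points_on_convex_arc_lt (x y : R -> R) (a b R1 : R) (v0 v1 v2 : R * R) :
  open_convex_curve x y a b -> 0 < R1 ->
  (forall t, a <= t <= b -> Rabs (curvature x y t) <= / R1) ->
  det2 v1 v2 <> 0 ->
  forall pts : list (R * R), NoDup pts ->
  (forall p, In p pts -> on_curve x y a b p /\ in_lattice v0 v1 v2 p) ->
  INR (length pts) < 2 + curve_length x y a b / Rpower (lattice_invariant v1 v2 * R1) (1 / 3).
Proof.
  intros Hoc HR Hk Hdet pts Hnd Hpts.
  pose proof Hoc as (Hab & Hreg & _).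
  set (c := Rpower (lattice_invariant v1 v2 * R1) (1 / 3)).
  assert (Hc : 0 < c)
    by (apply cube_root_pos, Rmult_lt_0_compat; [apply Rabs_pos_lt, Hdet | exact HR]).
  rewrite (curve_length_arclen x y a b ltac:(lra)).
  pose proof (arclen_le x y a b ltac:(lra) Hreg a b ltac:(lra) ltac:(lra) ltac:(lra)).
  assert (0 <= (arclen x y a b b - arclen x y a b a) / c) by (apply Rdiv_le_0_compat; lra).
  destruct (on_curve_params x y a b pts (fun p Hp => proj1 (Hpts p Hp))) as [ts [<- Hts]].
  rewrite length_map.
  destruct ts as [|t0 ts0] eqn:E; [simpl; lra|]; rewrite <- E in *.
  set (P := fun t => a <= t <= b /\ in_lattice v0 v1 v2 (x t, y t)).
  destruct (spread_of_spaced_points P (arclen x y a b) c Hc) with (ts := ts)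
    as [lo [hi [Hlo [Hhi Hspread]]]].
  - intros p q [Hp _] [Hq _] Hpq; apply arclen_lt; auto; lra.
  - intros s t u [Hs Ls] [Ht Lt] [Hu Lu] Hst Htu.
    apply (lattice_triple_arclength_ge x y a b R1 v0 v1 v2 Hoc HR Hk Hdet s t u); auto; lra.
  - apply NoDup_map_inv in Hnd; exact Hnd.
  - rewrite E; discriminate.
  - intros t Ht; split; [apply Hts, Ht|].
    apply Hpts, (in_map (fun r => (x r, y r))), Ht.
  - pose proof (Hts lo Hlo); pose proof (Hts hi Hhi).
    pose proof (arclen_le x y a b ltac:(lra) Hreg hi b ltac:(lra) ltac:(lra) ltac:(lra)).
    pose proof (arclen_le x y a b ltac:(lra) Hreg a lo ltac:(lra) ltac:(lra) ltac:(lra)).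
    apply (Rmult_lt_reg_l c); [exact Hc|].
    replace (c * (2 + (arclen x y a b b - arclen x y a b a) / c))
      with (2 * c + (arclen x y a b b - arclen x y a b a)) by (field; lra).
    lra.
Qed.

Theorem theorem6p2 (x y : R -> R) (a b R1 : R) (v0 v1 v2 : R * R) :
  open_convex_curve x y a b ->
  0 < R1 ->
  (forall t, a <= t <= b -> / Rabs (curvature x y t) >= R1) ->
  det2 v1 v2 <> 0 ->
  forall pts : list (R * R),
    NoDup pts ->
    (forall p, In p pts -> on_curve x y a b p /\ in_lattice v0 v1 v2 p) ->
    INR (length pts) <
      4 + curve_length x y a b / Rpower (lattice_invariant v1 v2 * R1) (1/3)
    /\
    (total_curvature x y a b <= PI ->
     INR (length pts) <
       2 + curve_length x y a b / Rpower (lattice_invariant v1 v2 * R1) (1/3)).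
Proof.
  intros Hoc HR Hrho Hdet pts Hnd Hpts.
  assert (Hk : forall t, a <= t <= b -> Rabs (curvature x y t) <= / R1).
  { intros t Ht; pose proof Hoc as (_ & _ & Hcurv & _).
    assert (0 < Rabs (curvature x y t)) by (apply Rabs_pos_lt, Hcurv, Ht).
    rewrite <- (Rinv_inv (Rabs (curvature x y t))).
    apply Rinv_le_contravar; [exact HR | apply Rge_le, Hrho, Ht]. }
  pose proof (lattice_points_on_convex_arc_lt x y a b R1 v0 v1 v2 Hoc HR Hk Hdet pts Hnd Hpts).
  split; [|intros _]; lra.
Qed.
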